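(* Let $X$ and $Y$ be finite topological spaces and give $X\times Y$ the product topology. Then for all $(a,b),(c,d)\in X\times Y$, $$\Psi_{X\times Y}((a,b),(c,d))=\Psi_X(a,c)\,|U_{[d]}|+\Psi_Y(b,d)\,|U_{[c]}|-\Psi_X(a,c)\,\Psi_Y(b,d),$$ where $U_{[c]}$ is the minimal open set of $[c]$ in the quotient space $X/{\sim}$ and $U_{[d]}$ is the minimal open set of $[d]$ in $Y/{\sim}$.
   Context: For a finite topological space $X$ and $x\in X$, $U_x$ denotes the minimal open set containing $x$ (the intersection of all open sets containing $x$). A nested sequence of open sets around $x$ is a finite sequence $U_0\subsetneq U_1\subsetneq\cdots\subsetneq U_m=X$ of open sets with $U_0=U_x$ such that for each $j$ there is no open set $V$ with $U_j\subsetneq V\subsetneq U_{j+1}$. The furtherness function $\Psi_X:X\times X\to\{0,1,\dots,|X|-1\}$ is defined by: $\Psi_X(x,y)$ is the smallest integer $k\ge 0$ such that there exists a nested sequence $(U_j)_{j\ge0}$ of open sets around $x$ with $y\in U_k$. For a finite space $X$, $\sim$ is the equivalence relation $x\sim y$ iff $\Psi_X(x,y)=\Psi_X(y,x)=0$ (equivalently $U_x=U_y$), and $X/{\sim}$ carries the quotient topology; in it $U_{[c]}=\{[y]\mid y\in U_c\}$, so $|U_{[c]}|$ is the number of $\sim$-classes meeting $U_c$. *)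

From mathcomp Require Import all_boot all_order all_algebra.
From Stdlib Require Import ClassicalEpsilon.
Set Implicit Arguments. Unset Strict Implicit. Unset Printing Implicit Defensive.

Definition is_topology (T : finType) (O : {set {set T}}) : Prop :=
  [/\ set0 \in O, [set: T] \in O,
      (forall U V, U \in O -> V \in O -> U :|: V \in O) &
      (forall U V, U \in O -> V \in O -> U :&: V \in O)].

Definition prod_top (X Y : finType) (OX : {set {set X}}) (OY : {set {set Y}})
  : {set {set (X * Y)}} :=
  [set W : {set X * Y} | [forall p in W, exists U in OX, exists V in OY,
     [&& p.1 \in U, p.2 \in V & setX U V \subset W]]].

Definition Umin (T : finType) (O : {set {set T}}) (x : T) : {set T} :=
  \bigcap_(U in O | x \in U) U.

Definition nested (T : finType) (O : {set {set T}}) (x : T) (s : seq {set T}) : Prop :=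
  [/\ 0 < size s,
      nth set0 s 0 = Umin O x,
      last set0 s = [set: T],
      all (fun U => U \in O) s &
      forall j, j.+1 < size s ->
        nth set0 s j \proper nth set0 s j.+1 /\
        ~ (exists V, [/\ V \in O, nth set0 s j \proper V & V \proper nth set0 s j.+1])].

Definition asb (P : Prop) : bool := if excluded_middle_informative P then true else false.

Definition psi_pred (T : finType) (O : {set {set T}}) (x y : T) : pred nat :=
  fun k => asb (exists s, nested O x s /\ k < size s /\ y \in nth set0 s k).

(* Furtherness function: the smallest such k (0 if none exists, which never
   happens for a finite topological space). *)
Definition Psi (T : finType) (O : {set {set T}}) (x y : T) : nat :=
  match excluded_middle_informative (exists k, psi_pred O x y k) with
  | left h => ex_minn h
  | right _ => 0
  end.

Definition sim (T : finType) (O : {set {set T}}) (x y : T) : bool :=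
  (Psi O x y == 0) && (Psi O y x == 0).

(* |U_[c]| in X/~ : the number of ~-classes meeting U_c. *)
Definition card_Uq (T : finType) (O : {set {set T}}) (c : T) : nat :=
  #|[set [set z | sim O y z] | y in Umin O c]|.

From mathcomp Require Import all_boot all_order all_algebra.
From mathcomp Require Import zify ring.
From Stdlib Require Import ClassicalEpsilon.
Set Implicit Arguments. Unset Strict Implicit. Unset Printing Implicit Defensive.

(* For an open set W let nu(W) be the number of ~-classes meeting W, i.e. the
   number of distinct minimal open sets U_y with y in W.  If the open set V
   covers the open set U, then V = U \cup U_y for a point y of V \ U whose
   U_y is minimal, so nu(V) = nu(U) + 1.  Hence every saturated chain of open
   sets from U_x up to an open W has length nu(W) - nu(U_x), and
   Psi(x,y) = nu(U_x \cup U_y) - nu(U_x) = nu(U_y) - nu(U_x \cap U_y) by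
   inclusion-exclusion.  In X x Y one has U_(a,b) = U_a x U_b and nu is
   multiplicative on boxes; expanding the products gives the formula. *)

Lemma asbP (P : Prop) : reflect P (asb P).
Proof. by rewrite /asb; case: excluded_middle_informative => h; constructor. Qed.

Lemma Psi_eq_min (T : finType) (O : {set {set T}}) x y n :
  psi_pred O x y n -> (forall k, psi_pred O x y k -> n <= k) -> Psi O x y = n.
Proof.
move=> Pn n_min; rewrite /Psi; case: excluded_middle_informative => [ex|]; last first.
  by case; exists n.
by case: ex_minnP => m Pm m_min; apply/eqP; rewrite eqn_leq m_min // n_min.
Qed.

Section FiniteSpace.

Variables (T : finType) (O : {set {set T}}).
Hypothesis tO : is_topology O.
Implicit Types (A B C U V W : {set T}) (x y z : T).

(* By [sim_Umin], this is the number of ~-classes meeting W. *)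
Definition nclasses (W : {set T}) : nat := #|[set Umin O y | y in W]|.

Definition covers (U V : {set T}) : bool :=
  (U \proper V) && [forall W in O, ~~ ((U \proper W) && (W \proper V))].

Lemma coversP U V :
  reflect (U \proper V /\ ~ exists W, [/\ W \in O, U \proper W & W \proper V])
          (covers U V).
Proof.
apply: (iffP andP) => -[UV noW]; split=> //.
- by case=> W [WO UW WV]; move/forall_inP/(_ W WO): noW; rewrite UW WV.
- by apply/forall_inP => W WO; apply/negP => /andP[UW WV]; apply: noW; exists W.
Qed.

Lemma Umin_id x : x \in Umin O x.
Proof. by apply/bigcapP => U /andP[]. Qed.

Lemma Umin_sub x U : U \in O -> x \in U -> Umin O x \subset U.
Proof. by move=> UO xU; apply: bigcap_inf; rewrite UO xU. Qed.

Lemma Umin_open x : Umin O x \in O.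
Proof.
have [_ OT _ OI] := tO.
by rewrite /Umin; elim/big_rec: _ => // U W /andP[UO _] WO; apply: OI.
Qed.

Lemma Umin_mono x y : y \in Umin O x -> Umin O y \subset Umin O x.
Proof. exact/Umin_sub/Umin_open. Qed.

Lemma open_setU_Umin A y : A \in O -> A :|: Umin O y \in O.
Proof. by have [_ _ OU _] := tO; move=> AO; apply: OU (Umin_open y). Qed.

Lemma nclasses_mono A B : A \subset B -> nclasses A <= nclasses B.
Proof. by move=> AB; apply/subset_leq_card/imsetS. Qed.

Lemma nclassesUI A B : A \in O -> B \in O ->
  nclasses (A :|: B) + nclasses (A :&: B) = nclasses A + nclasses B.
Proof.
move=> AO BO; rewrite /nclasses imsetU.
suff -> : [set Umin O z | z in A :&: B] =
          [set Umin O z | z in A] :&: [set Umin O z | z in B] by rewrite cardsUI.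
apply/setP => S; apply/imsetP/setIP => [[z /setIP[zA zB] ->]|].
  by split; apply: imset_f.
case=> /imsetP[u uA ->] /imsetP[v vB Euv]; exists u => //.
by rewrite inE uA (subsetP (Umin_sub BO vB)) // -Euv Umin_id.
Qed.

(* Take y in B \ A with #|Umin O y| least. *)
Lemma minimal_new_point A B : B \in O -> A \proper B ->
  exists2 y, y \in B :\: A &
    {in Umin O y :\: A, forall z, Umin O z = Umin O y}.
Proof.
move=> BO /properP[_ [y0 y0B y0A]].
have y0BA : y0 \in B :\: A by rewrite inE y0A y0B.
case: (arg_minnP (fun y => #|Umin O y|) y0BA) => y yBA y_min.
exists y => // z /setDP[zy zA]; have /setDP[yB _] := yBA.
have zB : z \in B by apply: (subsetP (Umin_sub BO yB)).
by apply/eqP; rewrite eqEcard Umin_mono //=; apply/y_min/setDP.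
Qed.

Section AddMinimalPoint.

Variables (A : {set T}) (y : T).
Hypotheses (AO : A \in O) (yA : y \notin A).
Hypothesis y_min : {in Umin O y :\: A, forall z, Umin O z = Umin O y}.

Lemma nclasses_setU_Umin : nclasses (A :|: Umin O y) = (nclasses A).+1.
Proof.
rewrite /nclasses.
have -> : [set Umin O z | z in A :|: Umin O y] = Umin O y |: [set Umin O z | z in A].
  apply/setP => S; apply/imsetP/setU1P => [[z]|].
  - rewrite inE => /orP[zA|zy] ->; first by right; apply: imset_f.
    have [zA|zA] := boolP (z \in A); first by right; apply: imset_f.
    by left; apply: y_min; rewrite inE zA.
  - case=> [->|/imsetP[z zA ->]]; first by exists y; rewrite // inE Umin_id orbT.
    by exists z; rewrite // inE zA.
rewrite cardsU1; suff -> : Umin O y \notin [set Umin O z | z in A] by [].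
apply/negP => /imsetP[z zA Eyz]; case/negP: yA.
by rewrite (subsetP (Umin_sub AO zA)) // -Eyz Umin_id.
Qed.

Lemma covers_setU_Umin : covers A (A :|: Umin O y).
Proof.
apply/coversP; split.
  by apply/properP; split; [apply: subsetUl | exists y; rewrite // inE Umin_id orbT].
case=> W [WO /properP[AW [z zW zA]] WAy].
have zy : z \in Umin O y.
  by move/subsetP/(_ z zW): (proper_sub WAy); rewrite inE (negbTE zA).
have yW : y \in W.
  by rewrite (subsetP (Umin_sub WO zW)) // y_min ?inE ?zA ?zy // Umin_id.
by move: WAy; rewrite properE subUset AW (Umin_sub WO yW) andbF.
Qed.

End AddMinimalPoint.

Lemma exists_cover A B : A \in O -> B \in O -> A \proper B ->
  exists2 C, C \in O & covers A C && (C \subset B).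
Proof.
move=> AO BO AB; have [y /setDP[yB yA] y_min] := minimal_new_point BO AB.
exists (A :|: Umin O y); first exact: open_setU_Umin.
by rewrite covers_setU_Umin // subUset (proper_sub AB) Umin_sub.
Qed.

Lemma nclasses_cover A V : A \in O -> V \in O -> covers A V ->
  nclasses V = (nclasses A).+1.
Proof.
move=> AO VO AV; have /coversP[AV' noW] := AV.
have [y /setDP[yV yA] y_min] := minimal_new_point VO AV'.
suff -> : V = A :|: Umin O y by apply: nclasses_setU_Umin.
have /coversP[AAy _] := covers_setU_Umin yA y_min.
apply/eqP; rewrite eq_sym eqEproper subUset (proper_sub AV') Umin_sub //=.
by apply/negP => AyV; apply: noW; exists (A :|: Umin O y); rewrite open_setU_Umin.
Qed.

Lemma exists_cover_chain A B : A \in O -> B \in O -> A \subset B ->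
  exists2 s, path covers A s & last A s = B /\ all [in O] s.
Proof.
have [n] := ubnP (#|B| - #|A|); elim: n A => // n IHn A ltBA AO BO AB.
have [<-|neAB] := eqVneq A B; first by exists [::].
have AprB : A \proper B by rewrite properEneq neAB.
have [C CO /andP[AC CB]] := exists_cover AO BO AprB.
have /andP[AprC _] := AC.
have ltAC := proper_card AprC; have leCB := subset_leq_card CB.
have [s Cs [sB sO]] := IHn C ltac:(lia) CO BO CB.
by exists (C :: s); rewrite /= ?AC ?CO.
Qed.

Lemma nclasses_chain A s k : A \in O -> all [in O] s -> path covers A s ->
  k <= size s -> nclasses (nth set0 (A :: s) k) = nclasses A + k.
Proof.
elim: s A k => [|B s IHs] A [|k] AO //=; rewrite ?addn0 //.
move=> /andP[BO sO] /andP[AB Bs] lek.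
by rewrite IHs // (nclasses_cover AO BO AB) addSnnS.
Qed.

Lemma chain_sub A s k : path covers A s -> k <= size s ->
  A \subset nth set0 (A :: s) k.
Proof.
elim: s A k => [|B s IHs] A [|k] //= /andP[/andP[/proper_sub AB _] Bs] lek.
exact: subset_trans AB (IHs _ _ Bs lek).
Qed.

Lemma nested_cons x A s : nested O x (A :: s) <->
  [/\ A = Umin O x, path covers A s, last A s = setT & all [in O] (A :: s)].
Proof.
rewrite /nested /=; split.
- case=> _ -> sT sO cov; split=> //.
  by apply/(pathP set0) => j ltj; apply/coversP; exact: cov.
- by case=> -> As sT sO; split=> // j ltj; apply/coversP; exact: (pathP set0 As).
Qed.

Lemma Psi_nclasses x y :
  Psi O x y = nclasses (Umin O x :|: Umin O y) - nclasses (Umin O x).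
Proof.
set Ux := Umin O x; set W := Ux :|: Umin O y.
have UxO : Ux \in O := Umin_open x.
have WO : W \in O := open_setU_Umin y UxO.
apply: Psi_eq_min; last first.
  move=> k /asbP[[|A s] [nest [lt_k y_k]]]; first by case: nest.
  have /nested_cons[eA As _ AsO] := nest; subst A.
  have /andP[_ sO] := AsO.
  have kO : nth set0 (Ux :: s) k \in O := allP AsO _ (mem_nth set0 lt_k).
  have WsubK : W \subset nth set0 (Ux :: s) k by rewrite subUset chain_sub // Umin_sub.
  by have := nclasses_mono WsubK; rewrite nclasses_chain //; lia.
have [_ OT _ _] := tO.
have [s1 s1c [s1W s1O]] := exists_cover_chain UxO WO (subsetUl _ _).
have [s2 s2c [s2T s2O]] := exists_cover_chain WO OT (subsetT W).
have s1_end : nth set0 (Ux :: s1) (size s1) = W.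
  by rewrite -s1W; exact: (nth_last set0 (Ux :: s1)).
have -> : nclasses W - nclasses Ux = size s1.
  by rewrite -s1_end nclasses_chain // addKn.
apply/asbP; exists (Ux :: s1 ++ s2); split.
  apply/nested_cons; split=> //; first by rewrite cat_path s1c s1W.
    by rewrite last_cat s1W.
  by rewrite /= UxO all_cat s1O.
split; first by rewrite /= size_cat ltnS leq_addr.
by rewrite -cat_cons nth_cat ltnSn s1_end inE Umin_id orbT.
Qed.

Lemma Psi_nclassesI x y :
  Psi O x y + nclasses (Umin O x :&: Umin O y) = nclasses (Umin O y).
Proof.
rewrite Psi_nclasses.
have := nclassesUI (Umin_open x) (Umin_open y).
have := nclasses_mono (subsetUl (Umin O x) (Umin O y)); lia.
Qed.

Lemma Psi_eq0 y z : (Psi O y z == 0) = (z \in Umin O y).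
Proof.
rewrite Psi_nclasses subn_eq0; apply/idP/idP => [le_yz|zy]; last first.
  by rewrite (setUidPl (Umin_mono zy)).
have /eqP E : [set Umin O u | u in Umin O y] ==
              [set Umin O u | u in Umin O y :|: Umin O z].
  by rewrite eqEcard (imsetS _ (subsetUl _ _)).
have : Umin O z \in [set Umin O u | u in Umin O y].
  by rewrite E imset_f // inE Umin_id orbT.
case/imsetP=> u uy Ezu.
by rewrite (subsetP (Umin_mono uy)) // -Ezu Umin_id.
Qed.

Lemma sim_Umin y z : sim O y z = (Umin O y == Umin O z).
Proof.
rewrite /sim !Psi_eq0; apply/andP/eqP => [[zy yz]|E].
  by apply/eqP; rewrite eqEsubset !Umin_mono.
by rewrite E Umin_id -E Umin_id.
Qed.

Lemma card_Uq_nclasses c : card_Uq O c = nclasses (Umin O c).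
Proof.
rewrite /card_Uq /nclasses; pose cls (S : {set T}) := [set z | Umin O z == S].
have -> : [set [set z | sim O y z] | y in Umin O c] = cls @: [set Umin O y | y in Umin O c].
  rewrite -imset_comp; apply: eq_imset => y.
  by apply/setP => z; rewrite !inE sim_Umin eq_sym.
apply: card_in_imset => _ _ /imsetP[u _ ->] /imsetP[v _ ->] E.
have : u \in cls (Umin O u) by rewrite inE.
by rewrite E inE => /eqP.
Qed.

End FiniteSpace.

Lemma setIX (X Y : finType) (P P' : {set X}) (Q Q' : {set Y}) :
  setX P Q :&: setX P' Q' = setX (P :&: P') (Q :&: Q').
Proof. by apply/setP => -[u v]; rewrite !inE /= andbACA. Qed.

Lemma setX_inj (X Y : finType) (P P' : {set X}) (Q Q' : {set Y}) x y :
  x \in P -> y \in Q -> setX P Q = setX P' Q' -> P = P' /\ Q = Q'.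
Proof.
move=> xP yQ E; have /setXP[xP' yQ'] : (x, y) \in setX P' Q' by rewrite -E inE xP yQ.
split; apply/setP => u.
- by move/setP/(_ (u, y)): E; rewrite !inE /= yQ yQ' !andbT.
- by move/setP/(_ (x, u)): E; rewrite !inE /= xP xP'.
Qed.

Section ProductSpace.

Variables (X Y : finType) (OX : {set {set X}}) (OY : {set {set Y}}).
Hypotheses (tX : is_topology OX) (tY : is_topology OY).

Lemma prod_top_topology : is_topology (prod_top OX OY).
Proof.
have [X0 XT XU XI] := tX; have [Y0 YT YU YI] := tY.
have box_sub (W W' : {set X * Y}) p : W \subset W' ->
    [exists U in OX, exists V in OY, [&& p.1 \in U, p.2 \in V & setX U V \subset W]] ->
    [exists U in OX, exists V in OY, [&& p.1 \in U, p.2 \in V & setX U V \subset W']].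
  move=> WW' /exists_inP[U UO /exists_inP[V VO /and3P[pU pV UVW]]].
  apply/exists_inP; exists U => //; apply/exists_inP; exists V => //.
  by rewrite pU pV (subset_trans UVW WW').
split.
- by rewrite inE; apply/forall_inP => p; rewrite inE.
- rewrite inE; apply/forall_inP => p _; apply/exists_inP; exists setT => //.
  by apply/exists_inP; exists setT; rewrite ?inE ?subsetT.
- move=> U V; rewrite !inE => /forall_inP HU /forall_inP HV.
  apply/forall_inP => p; rewrite inE => /orP[pU|pV].
  + by apply: box_sub (HU p pU); apply: subsetUl.
  + by apply: box_sub (HV p pV); apply: subsetUr.
- move=> U V; rewrite !inE => /forall_inP HU /forall_inP HV.
  apply/forall_inP => p; rewrite inE => /andP[pU pV].
  have /exists_inP[A AO /exists_inP[B BO /and3P[pA pB sAB]]] := HU p pU.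
  have /exists_inP[A' AO' /exists_inP[B' BO' /and3P[pA' pB' sAB']]] := HV p pV.
  apply/exists_inP; exists (A :&: A'); first exact: XI.
  apply/exists_inP; exists (B :&: B'); first exact: YI.
  by rewrite !inE pA pB pA' pB' -setIX setISS.
Qed.

Lemma Umin_prod a b :
  Umin (prod_top OX OY) (a, b) = setX (Umin OX a) (Umin OY b).
Proof.
apply/eqP; rewrite eqEsubset; apply/andP; split.
- apply: Umin_sub; last by rewrite inE /= !Umin_id.
  rewrite inE; apply/forall_inP => p pUab.
  apply/exists_inP; exists (Umin OX a); first exact: Umin_open.
  apply/exists_inP; exists (Umin OY b); first exact: Umin_open.
  by move: pUab; rewrite inE => /andP[-> ->] /=.
- apply/subsetP => -[u v] /setXP[ua vb]; apply/bigcapP => W /andP[WO abW].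
  move: WO; rewrite inE => /forall_inP /(_ _ abW).
  case/exists_inP=> A AO /exists_inP[B BO /and3P[aA bB sAB]].
  apply: (subsetP sAB); rewrite inE /=.
  by rewrite (subsetP (Umin_sub AO aA)) ?(subsetP (Umin_sub BO bB)).
Qed.

Lemma nclassesX (A : {set X}) (B : {set Y}) :
  nclasses (prod_top OX OY) (setX A B) = nclasses OX A * nclasses OY B.
Proof.
rewrite /nclasses -cardsX.
have -> : [set Umin (prod_top OX OY) p | p in setX A B] =
    [set setX PQ.1 PQ.2 | PQ in setX [set Umin OX x | x in A] [set Umin OY y | y in B]].
  apply/setP => S; apply/imsetP/imsetP.
  - case=> -[x y] /setXP[xA yB] ->; exists (Umin OX x, Umin OY y).
      by rewrite inE /= !imset_f.
    by rewrite Umin_prod.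
  - case=> -[P Q] /setXP[/imsetP[x xA ->] /imsetP[y yB ->]] ->.
    by exists (x, y); rewrite ?inE ?xA ?yB // Umin_prod.
apply: card_in_imset => -[P Q] [P' Q'] /setXP[/imsetP[x _ ->] /imsetP[y _ ->]] _ E.
by have [-> ->] := setX_inj (Umin_id OX x) (Umin_id OY y) E.
Qed.

End ProductSpace.

Import GRing.Theory Num.Theory.
Local Open Scope ring_scope.

Theorem theorem4p1 (X Y : finType) (OX : {set {set X}}) (OY : {set {set Y}}) :
  is_topology OX -> is_topology OY ->
  forall (a c : X) (b d : Y),
    ((Psi (prod_top OX OY) (a, b) (c, d))%:Z : int) =
      (Psi OX a c)%:Z * (card_Uq OY d)%:Z + (Psi OY b d)%:Z * (card_Uq OX c)%:Z
      - (Psi OX a c)%:Z * (Psi OY b d)%:Z.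
Proof.
move=> tX tY a c b d.
have := Psi_nclassesI (prod_top_topology tX tY) (a, b) (c, d).
rewrite !card_Uq_nclasses // !Umin_prod // setIX !nclassesX //.
rewrite -(Psi_nclassesI tX a c) -(Psi_nclassesI tY b d).
set P := Psi _ _ _; set p := Psi OX a c; set q := Psi OY b d.
set i := nclasses OX _; set j := nclasses OY _ => HP.
have -> : P = (p * q + p * j + i * q)%N.
  by apply/(@addIn (i * j)); rewrite HP mulnDl !mulnDr !addnA.
by rewrite !PoszD !PoszM; ring.
Qed.
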